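(* Let $I$ be a compact non-degenerate interval and let $f:I\to\mathbb{R}$ be continuous. If the graph $\{(x,f(x)):x\in I\}\subseteq\mathbb{R}^2$ is $1$-monotone, then $f$ is of bounded variation.
   Context: A metric space $(X,d)$ is $c$-monotone ($c>0$) if there is a linear order $<$ on $X$ such that $d(x,y)\le c\,d(x,z)$ whenever $x<y<z$ in $X$. The graph carries the Euclidean metric of $\mathbb{R}^2$. *)

From Stdlib Require Import Reals List.
Open Scope R_scope.

Definition dist2 (p q : R * R) : R :=
  sqrt ((fst p - fst q) ^ 2 + (snd p - snd q) ^ 2).

Definition linear_order_on {T : Type} (S : T -> Prop) (le : T -> T -> Prop) : Prop :=
  (forall x, S x -> le x x) /\
  (forall x y, S x -> S y -> le x y -> le y x -> x = y) /\
  (forall x y z, S x -> S y -> S z -> le x y -> le y z -> le x z) /\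
  (forall x y, S x -> S y -> le x y \/ le y x).

Definition c_monotone (c : R) (S : R * R -> Prop) : Prop :=
  exists le : R * R -> R * R -> Prop,
    linear_order_on S le /\
    forall x y z, S x -> S y -> S z ->
      le x y -> x <> y -> le y z -> y <> z ->
      dist2 x y <= c * dist2 x z.

Definition graph_on (f : R -> R) (a b : R) : R * R -> Prop :=
  fun p => a <= fst p <= b /\ snd p = f (fst p).

Fixpoint var_sum (f : R -> R) (x : R) (l : list R) : R :=
  match l with
  | nil => 0
  | y :: l' => Rabs (f y - f x) + var_sum f y l'
  end.

Fixpoint is_partition_from (x : R) (l : list R) (b : R) : Prop :=
  match l with
  | nil => x = b
  | y :: l' => x <= y /\ is_partition_from y l' b
  end.

Definition bounded_variation (f : R -> R) (a b : R) : Prop :=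
  exists M : R, forall l : list R,
    is_partition_from a l b -> var_sum f a l <= M.

Definition continuous_on_interval (f : R -> R) (a b : R) : Prop :=
  forall x, a <= x <= b ->
    forall eps, 0 < eps -> exists delta, 0 < delta /\
      forall y, a <= y <= b -> Rabs (y - x) < delta -> Rabs (f y - f x) < eps.

(** Up to a reflection x |-> -x, the 1-monotone order on the graph of a
    continuous f must be the order of the abscissae: a point P(s) lying
    order-between P(t) and P(u) with s outside [t,u] would be separated, by
    continuity, from a pair of arbitrarily close graph points on either side
    of it, against 1-monotonicity.  Hence distances from each graph point to
    later ones are nondecreasing.  For such an "expanding" graph, with
    g(x) = f(x) - x and mu(x) = min_[a,x] g, one has
    f(x) - f(y) <= (y - x) + mu(x) - mu(y) for x < y, so
    Psi(x) = 2x - 2 mu(x) + f(x) is nondecreasing and dominates every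
    increment |f(y) - f(x)|; the variation of f is then at most
    Psi(b) - Psi(a). *)

From Stdlib Require Import Reals Lra Psatz ClassicalEpsilon Classical.
Open Scope R_scope.

Lemma dist2_sym (p q : R * R) : dist2 p q = dist2 q p.
Proof. unfold dist2; f_equal; ring. Qed.

Lemma dist2_reflect (x1 y1 x2 y2 : R) :
  dist2 (- x1, y1) (- x2, y2) = dist2 (x1, y1) (x2, y2).
Proof. unfold dist2; simpl; f_equal; ring. Qed.

Lemma Rabs_fst_le_dist2 (p q : R * R) : Rabs (fst p - fst q) <= dist2 p q.
Proof.
  unfold dist2. rewrite <- (sqrt_pow2 (Rabs (fst p - fst q))) by apply Rabs_pos.
  apply sqrt_le_1_alt. rewrite pow2_abs. pose proof (pow2_ge_0 (snd p - snd q)). lra.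
Qed.

Lemma dist2_le_Rabs (p q : R * R) :
  dist2 p q <= Rabs (fst p - fst q) + Rabs (snd p - snd q).
Proof.
  unfold dist2.
  rewrite <- (sqrt_pow2 (Rabs (fst p - fst q) + Rabs (snd p - snd q)))
    by (pose proof (Rabs_pos (fst p - fst q)); pose proof (Rabs_pos (snd p - snd q)); lra).
  apply sqrt_le_1_alt. rewrite <- (pow2_abs (fst p - fst q)), <- (pow2_abs (snd p - snd q)).
  pose proof (Rabs_pos (fst p - fst q)); pose proof (Rabs_pos (snd p - snd q)). nra.
Qed.

Lemma graph_dist_small (f : R -> R) (a b c eps : R) :
  continuous_on_interval f a b -> a <= c <= b -> 0 < eps ->
  exists delta, 0 < delta /\
    forall v w, a <= v <= b -> a <= w <= b -> Rabs (v - c) < delta -> Rabs (w - c) < delta ->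
      dist2 (v, f v) (w, f w) < eps.
Proof.
  intros Hc Hcab Heps.
  destruct (Hc c Hcab (eps / 4) ltac:(lra)) as [d [Hd Hfd]].
  exists (Rmin d (eps / 4)). split; [apply Rmin_glb_lt; lra|].
  intros v w Hv Hw Hvc Hwc.
  pose proof (Rmin_l d (eps / 4)); pose proof (Rmin_r d (eps / 4)).
  pose proof (Hfd v Hv ltac:(lra)); pose proof (Hfd w Hw ltac:(lra)).
  pose proof (dist2_le_Rabs (v, f v) (w, f w)) as Hdist; simpl in Hdist.
  assert (Htri : forall p q r, Rabs (p - q) <= Rabs (p - r) + Rabs (q - r)).
  { intros p q r. rewrite (Rabs_minus_sym q r).
    replace (p - q) with ((p - r) + (r - q)) by ring. apply Rabs_triang. }
  pose proof (Htri v w c); pose proof (Htri (f v) (f w) (f c)). lra.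
Qed.

(* A property that propagates along eps-short steps of a continuous graph
   spreads over a whole interval: the supremum of where it holds cannot stop
   short of u. *)
Lemma continuous_graph_spread (f : R -> R) (a b t u eps : R) (S : R -> Prop) :
  continuous_on_interval f a b -> a <= t -> t <= u -> u <= b -> 0 < eps ->
  (forall v w, t <= v <= u -> t <= w <= u -> dist2 (v, f v) (w, f w) < eps -> S v -> S w) ->
  S t -> S u.
Proof.
  intros Hc Hat Htu Hub Heps Hstep St.
  set (E := fun x => t <= x <= u /\ S x).
  destruct (completeness E) as [c [Hub_c Hlub_c]].
  { exists u. intros x [Hx _]. lra. }
  { exists t. split; [lra | exact St]. }
  assert (Htc : t <= c) by (apply Hub_c; split; [lra | exact St]).
  assert (Hcu : c <= u) by (apply Hlub_c; intros x [Hx _]; lra).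
  destruct (graph_dist_small f a b c eps Hc ltac:(lra) Heps) as [delta [Hdelta Hclose]].
  assert (Sc : S c).
  { assert (Hnub : ~ is_upper_bound E (c - delta)) by (intro H; specialize (Hlub_c _ H); lra).
    apply not_all_ex_not in Hnub as [x Hx]. apply imply_to_and in Hx as [[Hx Sx] Hxc].
    assert (x <= c) by (apply Hub_c; split; assumption).
    apply (Hstep x c); [lra | lra | | exact Sx].
    apply Hclose; try lra; rewrite ?Rminus_diag, ?Rabs_R0, ?Rabs_left1; lra. }
  destruct (Rle_lt_or_eq_dec c u Hcu) as [Hlt | <-]; [exfalso | exact Sc].
  set (w := Rmin (c + delta / 2) u).
  assert (Hw1 : w <= c + delta / 2) by apply Rmin_l.
  assert (Hw2 : w <= u) by apply Rmin_r.
  assert (Hcw : c < w) by (apply Rmin_glb_lt; lra).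
  assert (Sw : S w).
  { apply (Hstep c w); [lra | lra | | exact Sc].
    apply Hclose; try lra; rewrite ?Rminus_diag, ?Rabs_R0, ?Rabs_right; lra. }
  assert (w <= c) by (apply Hub_c; split; [lra | exact Sw]).
  lra.
Qed.

(* The spreading hypothesis says that no s outside [t,u] lies between t and u. *)
Lemma relation_monotone_of_endpoints (r : R -> R -> Prop) (a b : R) :
  a < b ->
  (forall x y, a <= x <= b -> a <= y <= b -> r x y \/ r y x) ->
  (forall x y, a <= x <= b -> a <= y <= b -> r x y -> r y x -> x = y) ->
  (forall t u s, a <= t -> t < u -> u <= b -> a <= s <= b -> s < t \/ u < s -> r t s -> r u s) ->
  r a b -> forall s t, a <= s -> s < t -> t <= b -> r s t.
Proof.
  intros Hab Htot Hanti Hspread Hrab.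
  assert (Hfrom_a : forall t, a < t <= b -> r a t).
  { intros t Ht. destruct (Rle_lt_or_eq_dec t b (proj2 Ht)) as [Htb | ->]; [|exact Hrab].
    destruct (Htot a t ltac:(lra) ltac:(lra)) as [Hat | Hta]; [exact Hat|].
    assert (Hba : r b a)
      by (apply (Hspread t b a); [lra | lra | lra | lra | left; lra | exact Hta]).
    assert (a = b) by (apply Hanti; [lra | lra | exact Hrab | exact Hba]).
    lra. }
  intros s t Has Hst Htb.
  destruct (Rle_lt_or_eq_dec a s Has) as [Has' | <-]; [|apply Hfrom_a; lra].
  apply (Hspread a s t); [lra | lra | lra | lra | right; lra | apply Hfrom_a; lra].
Qed.

Section GraphOrder.

Variables (f : R -> R) (a b : R) (le : R * R -> R * R -> Prop).
Hypothesis Hab : a < b.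
Hypothesis Hc : continuous_on_interval f a b.
Hypothesis Hlin : linear_order_on (graph_on f a b) le.
Hypothesis Hmon : forall x y z, graph_on f a b x -> graph_on f a b y -> graph_on f a b z ->
  le x y -> x <> y -> le y z -> y <> z -> dist2 x y <= 1 * dist2 x z.

Let P x := (x, f x).

Lemma graph_on_P x : a <= x <= b -> graph_on f a b (P x).
Proof. intros H. split; [exact H | reflexivity]. Qed.

Lemma graph_order_total x y : a <= x <= b -> a <= y <= b -> le (P x) (P y) \/ le (P y) (P x).
Proof.
  intros Hx Hy. destruct Hlin as [_ [_ [_ Htot]]].
  apply Htot; apply graph_on_P; assumption.
Qed.

Lemma graph_order_antisym x y : a <= x <= b -> a <= y <= b ->
  le (P x) (P y) -> le (P y) (P x) -> x = y.
Proof.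
  intros Hx Hy Hxy Hyx. destruct Hlin as [_ [Hanti _]].
  assert (E : P x = P y) by (apply Hanti; auto; apply graph_on_P; assumption).
  now injection E.
Qed.

Lemma graph_order_dist x y z : a <= x <= b -> a <= y <= b -> a <= z <= b ->
  le (P x) (P y) -> x <> y -> le (P y) (P z) -> y <> z ->
  dist2 (P x) (P y) <= dist2 (P x) (P z).
Proof.
  intros Hx Hy Hz Hxy Nxy Hyz Nyz. rewrite <- (Rmult_1_l (dist2 (P x) (P z))).
  apply Hmon; try apply graph_on_P; auto; unfold P; intro E; injection E; auto.
Qed.

(* A graph point [P w] on the other side of [P s] than a nearby [P v] would be
   closer to [P v] than [P s] is. *)
Lemma graph_order_short_step s v w d :
  a <= s <= b -> a <= v <= b -> a <= w <= b ->
  d <= Rabs (v - s) -> d <= Rabs (w - s) -> dist2 (P v) (P w) < d ->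
  (le (P v) (P s) -> le (P w) (P s)) /\ (le (P s) (P v) -> le (P s) (P w)).
Proof.
  intros Hs Hv Hw Hvs Hws Hvw.
  assert (Hds : forall x, Rabs (x - s) <= dist2 (P x) (P s))
    by (intro x; exact (Rabs_fst_le_dist2 (P x) (P s))).
  assert (0 <= dist2 (P v) (P w)) by apply sqrt_pos.
  assert (Nv : v <> s) by (intros ->; rewrite Rminus_diag, Rabs_R0 in Hvs; lra).
  assert (Nw : w <> s) by (intros ->; rewrite Rminus_diag, Rabs_R0 in Hws; lra).
  split; intro Hvs_le.
  - destruct (graph_order_total w s Hw Hs) as [Hws_le | Hsw]; [exact Hws_le | exfalso].
    pose proof (graph_order_dist v s w Hv Hs Hw Hvs_le Nv Hsw (not_eq_sym Nw)).
    pose proof (Hds v). lra.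
  - destruct (graph_order_total s w Hs Hw) as [Hsw | Hws_le]; [exact Hsw | exfalso].
    pose proof (graph_order_dist w s v Hw Hs Hv Hws_le Nw Hvs_le (not_eq_sym Nv)).
    rewrite dist2_sym in Hvw. pose proof (Hds w). lra.
Qed.

Lemma graph_order_not_between t u s :
  a <= t -> t < u -> u <= b -> a <= s <= b -> s < t \/ u < s ->
  (le (P t) (P s) -> le (P u) (P s)) /\ (le (P s) (P t) -> le (P s) (P u)).
Proof.
  intros Hat Htu Hub Hs Hout.
  set (d := Rmin (Rabs (t - s)) (Rabs (u - s))).
  assert (Hd : 0 < d) by (apply Rmin_glb_lt; apply Rabs_pos_lt; lra).
  assert (Hfar : forall v, t <= v <= u -> d <= Rabs (v - s)).
  { intros v Hv. destruct Hout.
    - apply Rle_trans with (Rabs (t - s)); [apply Rmin_l | rewrite !Rabs_right; lra].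
    - apply Rle_trans with (Rabs (u - s)); [apply Rmin_r | rewrite !Rabs_left; lra]. }
  split; intro Hts;
    apply (continuous_graph_spread f a b t u d); auto; try lra;
    intros v w Hv Hw Hvw;
    apply (graph_order_short_step s v w d); auto; lra.
Qed.

Lemma graph_order_monotone :
  (forall s t, a <= s -> s < t -> t <= b -> le (P s) (P t)) \/
  (forall s t, a <= s -> s < t -> t <= b -> le (P t) (P s)).
Proof.
  destruct (graph_order_total a b ltac:(lra) ltac:(lra)) as [Hab_le | Hba_le].
  - left. apply (relation_monotone_of_endpoints (fun x y => le (P x) (P y))); auto.
    + apply graph_order_total.
    + apply graph_order_antisym.
    + intros t u s Ht Htu Hu Hs Hout.
      exact (proj1 (graph_order_not_between t u s Ht Htu Hu Hs Hout)).
  - right. apply (relation_monotone_of_endpoints (fun x y => le (P y) (P x))); auto.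
    + intros x y Hx Hy. apply graph_order_total; assumption.
    + intros x y Hx Hy Hxy Hyx. apply graph_order_antisym; assumption.
    + intros t u s Ht Htu Hu Hs Hout.
      exact (proj2 (graph_order_not_between t u s Ht Htu Hu Hs Hout)).
Qed.

End GraphOrder.

Definition expanding (f : R -> R) (a b : R) : Prop :=
  forall s t u, a <= s -> s < t -> t < u -> u <= b ->
    dist2 (s, f s) (t, f t) <= dist2 (s, f s) (u, f u).

Lemma graph_order_expanding (f : R -> R) (a b : R) (le : R * R -> R * R -> Prop) :
  a < b -> continuous_on_interval f a b -> linear_order_on (graph_on f a b) le ->
  (forall x y z, graph_on f a b x -> graph_on f a b y -> graph_on f a b z ->
     le x y -> x <> y -> le y z -> y <> z -> dist2 x y <= 1 * dist2 x z) ->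
  expanding f a b \/ expanding (fun x => f (- x)) (- b) (- a).
Proof.
  intros Hab Hc Hlin Hmon.
  destruct (graph_order_monotone f a b le Hab Hc Hlin Hmon) as [Hinc | Hdec].
  - left. intros s t u Hs Hst Htu Hu.
    apply (graph_order_dist f a b le Hmon); try apply Hinc; lra.
  - right. intros s t u Hs Hst Htu Hu. rewrite <- !(dist2_reflect s).
    apply (graph_order_dist f a b le Hmon); try apply Hdec; lra.
Qed.

Definition min_on (g : R -> R) (a x m : R) : Prop :=
  (exists s, a <= s <= x /\ g s = m) /\ forall z, a <= z <= x -> m <= g z.

Definition running_min (g : R -> R) (a x : R) : R := epsilon (inhabits 0) (min_on g a x).

Lemma running_min_spec (g : R -> R) (a x : R) :
  continuity g -> a <= x -> min_on g a x (running_min g a x).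
Proof.
  intros Hg Hax. unfold running_min. apply epsilon_spec.
  destruct (continuity_ab_min g a x Hax (fun c _ => Hg c)) as [s [Hmin Hs]].
  exists (g s). split; [exists s; split; [exact Hs | reflexivity] | exact Hmin].
Qed.

Lemma running_min_le (g : R -> R) (a x : R) :
  continuity g -> a <= x -> running_min g a x <= g x.
Proof. intros Hg Hax. apply (running_min_spec g a x Hg Hax). lra. Qed.

Lemma running_min_antitone (g : R -> R) (a x y : R) :
  continuity g -> a <= x -> x <= y -> running_min g a y <= running_min g a x.
Proof.
  intros Hg Hax Hxy.
  destruct (proj1 (running_min_spec g a x Hg Hax)) as [s [Hs <-]].
  apply (running_min_spec g a y Hg); lra.
Qed.

Definition controls_variation (Psi f : R -> R) (a b : R) : Prop :=
  forall x y, a <= x -> x <= y -> y <= b -> Rabs (f y - f x) <= Psi y - Psi x.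

Section Expanding.

Variables (F : R -> R) (a b : R).
Hypothesis HF : continuity F.
Hypothesis HE : expanding F a b.

Let g x := F x - x.
Let mu x := running_min g a x.

Lemma g_continuity : continuity g.
Proof.
  assert (H : continuity (F - id)%F)
    by (apply continuity_minus; [exact HF | apply derivable_continuous, derivable_id]).
  intro x. exact (H x).
Qed.

Lemma expanding_drop_bound s t u : a <= s -> s < t -> t < u -> u <= b ->
  g s <= g t -> g s <= g u -> F t - F u <= u - t.
Proof.
  intros Hs Hst Htu Hu Hgt Hgu. pose proof (HE s t u Hs Hst Htu Hu) as Hd.
  unfold dist2 in Hd; simpl in Hd. apply sqrt_le_0 in Hd;
    [| pose proof (pow2_ge_0 (s - t)); pose proof (pow2_ge_0 (F s - F t)); lra
     | pose proof (pow2_ge_0 (s - u)); pose proof (pow2_ge_0 (F s - F u)); lra].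
  unfold g in *. nra.
Qed.

Lemma expanding_drop_le x y : a <= x -> x < y -> y <= b ->
  F x - F y <= (y - x) + mu x - mu y.
Proof.
  intros Hax Hxy Hyb.
  pose proof (running_min_antitone g a x y g_continuity Hax ltac:(lra)) as Hmu.
  pose proof (running_min_le g a y g_continuity ltac:(lra)) as Hmuy.
  pose proof (running_min_le g a x g_continuity Hax) as Hmux.
  destruct (proj1 (running_min_spec g a x g_continuity Hax)) as [s [Hs Hgs]].
  fold (mu x) in Hgs, Hmux, Hmu. fold (mu y) in Hmu, Hmuy.
  assert (Hdrop_x : forall z, x <= z <= b -> mu x <= g z -> F x - F z <= z - x).
  { intros z Hz Hgz. destruct (Rle_lt_or_eq_dec x z (proj1 Hz)) as [Hxz | <-]; [|lra].
    destruct (Rle_lt_or_eq_dec s x (proj2 Hs)) as [Hsx | ->].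
    - apply (expanding_drop_bound s); lra.
    - unfold g in *. lra. }
  destruct (Rle_dec (g x) (g y)) as [Hxy_g | Hxy_g]; [unfold g in *; lra|].
  destruct (Rle_dec (mu x) (g y)) as [Hy | Hy]; [pose proof (Hdrop_x y ltac:(lra) Hy); lra|].
  (* Otherwise [g] falls through the level [mu x] at some [tau] in [x,y]. *)
  destruct (IVT_cor (fun z => g z - mu x) x y) as [tau [Htau Hgtau]].
  { assert (H : continuity (g - fct_cte (mu x))%F)
      by (apply continuity_minus;
          [exact g_continuity | apply continuity_const; intros ? ?; reflexivity]).
    intro z. exact (H z). }
  { lra. }
  { nra. }
  pose proof (Hdrop_x tau ltac:(lra) ltac:(lra)).
  unfold g in *. lra.
Qed.

Lemma expanding_controls_variation :
  controls_variation (fun x => 2 * x - 2 * mu x + F x) F a b.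
Proof.
  intros x y Hax Hxy Hyb.
  destruct (Rle_lt_or_eq_dec x y Hxy) as [Hlt | <-].
  - pose proof (expanding_drop_le x y Hax Hlt Hyb).
    pose proof (running_min_antitone g a x y g_continuity Hax Hxy). fold (mu x) (mu y) in *.
    unfold Rabs; destruct Rcase_abs; lra.
  - rewrite Rminus_diag, Rabs_R0. lra.
Qed.

End Expanding.

Definition clamp (a b x : R) : R := Rmax a (Rmin b x).

Lemma clamp_id (a b x : R) : a <= x <= b -> clamp a b x = x.
Proof. intros [Hax Hxb]. unfold clamp. rewrite Rmin_right, Rmax_right; lra. Qed.

Lemma clamp_in (a b x : R) : a <= b -> a <= clamp a b x <= b.
Proof.
  intros Hab. unfold clamp. split; [apply Rmax_l|].
  apply Rmax_lub; [lra | apply Rmin_l].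
Qed.

Lemma clamp_lipschitz (a b x y : R) : Rabs (clamp a b y - clamp a b x) <= Rabs (y - x).
Proof.
  unfold clamp, Rmax, Rmin. pose proof (Rle_abs (y - x)). pose proof (Rle_abs (- (y - x))).
  rewrite Rabs_Ropp in *. apply Rabs_le. repeat destruct Rle_dec; lra.
Qed.

Lemma continuity_clamp_comp (f : R -> R) (a b : R) :
  a <= b -> continuous_on_interval f a b -> continuity (fun x => f (clamp a b x)).
Proof.
  intros Hab Hc x eps Heps.
  destruct (Hc (clamp a b x) (clamp_in a b x Hab) eps Heps) as [d [Hd Hfd]].
  exists d. split; [exact Hd|]. intros y [_ Hy]. simpl in *. unfold R_dist in *.
  apply Hfd; [apply clamp_in; exact Hab|].
  pose proof (clamp_lipschitz a b x y). lra.
Qed.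

Lemma continuous_expanding_controlled (f : R -> R) (a b : R) :
  a <= b -> continuous_on_interval f a b -> expanding f a b ->
  exists Psi, controls_variation Psi f a b.
Proof.
  intros Hab Hc HE.
  set (F := fun x => f (clamp a b x)).
  assert (HFf : forall x, a <= x <= b -> F x = f x)
    by (intros x Hx; unfold F; rewrite clamp_id by exact Hx; reflexivity).
  assert (HEF : expanding F a b).
  { intros s t u Hs Hst Htu Hu. rewrite !HFf by lra. apply HE; assumption. }
  eexists. intros x y Hx Hxy Hy. rewrite <- !HFf by lra.
  apply (expanding_controls_variation F a b (continuity_clamp_comp f a b Hab Hc) HEF); assumption.
Qed.

Lemma continuous_on_interval_reflect (f : R -> R) (a b : R) :
  continuous_on_interval f a b -> continuous_on_interval (fun x => f (- x)) (- b) (- a).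
Proof.
  intros Hc x Hx eps Heps.
  destruct (Hc (- x) ltac:(lra) eps Heps) as [d [Hd Hfd]].
  exists d. split; [exact Hd|]. intros y Hy Hyx.
  apply Hfd; [lra|]. replace (- y - - x) with (- (y - x)) by ring. rewrite Rabs_Ropp. exact Hyx.
Qed.

Lemma controls_variation_reflect (Psi f : R -> R) (a b : R) :
  controls_variation Psi (fun x => f (- x)) (- b) (- a) ->
  controls_variation (fun x => - Psi (- x)) f a b.
Proof.
  intros H x y Hx Hxy Hy. pose proof (H (- y) (- x) ltac:(lra) ltac:(lra) ltac:(lra)) as Hyx.
  cbv beta in Hyx. rewrite !Ropp_involutive, Rabs_minus_sym in Hyx. lra.
Qed.

Lemma is_partition_from_le (x b : R) (l : list R) : is_partition_from x l b -> x <= b.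
Proof.
  revert x. induction l as [|y l IH]; simpl; intros x H; [lra|].
  destruct H as [Hxy Hl]. specialize (IH y Hl). lra.
Qed.

Lemma var_sum_le_controls (Psi f : R -> R) (a b : R) :
  controls_variation Psi f a b ->
  forall l x, a <= x -> is_partition_from x l b -> var_sum f x l <= Psi b - Psi x.
Proof.
  intros H. induction l as [|y l IH]; simpl; intros x Hx Hp; [subst; lra|].
  destruct Hp as [Hxy Hl]. pose proof (is_partition_from_le y b l Hl).
  specialize (IH y ltac:(lra) Hl). specialize (H x y Hx Hxy ltac:(lra)). lra.
Qed.

Lemma bounded_variation_of_controls (Psi f : R -> R) (a b : R) :
  controls_variation Psi f a b -> bounded_variation f a b.
Proof.
  intros H. exists (Psi b - Psi a). intros l Hl.
  apply (var_sum_le_controls Psi f a b H); [lra | exact Hl].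
Qed.

Theorem theorem6p5 (f : R -> R) (a b : R) :
  a < b ->
  continuous_on_interval f a b ->
  c_monotone 1 (graph_on f a b) ->
  bounded_variation f a b.
Proof.
  intros Hab Hc [le [Hlin Hmon]].
  destruct (graph_order_expanding f a b le Hab Hc Hlin Hmon) as [HE | HE].
  - destruct (continuous_expanding_controlled f a b ltac:(lra) Hc HE) as [Psi HPsi].
    exact (bounded_variation_of_controls Psi f a b HPsi).
  - destruct (continuous_expanding_controlled (fun x => f (- x)) (- b) (- a) ltac:(lra)
                (continuous_on_interval_reflect f a b Hc) HE) as [Psi HPsi].
    exact (bounded_variation_of_controls _ f a b (controls_variation_reflect Psi f a b HPsi)).
Qed.
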